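(* Let $n\in\mathbb{N}$ and let $f\colon[0,1]^n\to[0,1]$ be an aggregation function. Let $[0,1]^n_*$ be the set of $\mathbf{a}\in[0,1]^n$ with $\mathbf{a}\neq(0,\dots,0)$ and $\mathbf{a}\neq(1,\dots,1)$, and for $\mathbf{a}=(a_0,\dots,a_{n-1})\in[0,1]^n_*$ put $J_{\mathbf{a}}=\{i:a_i\neq0\}$ and $h^f_{\mathbf{a}}(\mathbf{x})=G^n_{f(\mathbf{a})}(\mathbf{x})\wedge\bigwedge_{i\in J_{\mathbf{a}}}\chi_{a_i}(x_i)$. Then $f(\mathbf{x})=\bigvee_{\mathbf{a}\in[0,1]^n_*}h^f_{\mathbf{a}}(\mathbf{x})$ for all $\mathbf{x}\in[0,1]^n$.
   Context: An $n$-ary aggregation function on $[0,1]$ is a function $f\colon[0,1]^n\to[0,1]$ nondecreasing in each coordinate with $f(0,\dots,0)=0$ and $f(1,\dots,1)=1$. For $a\in[0,1]$, $\chi_a(x)=1$ if $x\ge a$ and $x\neq0$, and $\chi_a(x)=0$ otherwise. $\mathsf{Med}_b(x,y)$ is the median of $x,y,b$. For $b\in[0,1]$, $G^n_b\colon[0,1]^n\to[0,1]$ is defined inductively by $G^1_b(x_0)=\mathsf{Med}_b(\chi_0(x_0),\chi_1(x_0))$, $G^2_b(x_0,x_1)=\mathsf{Med}_b(\chi_0(x_0\vee x_1),\chi_1(x_0\wedge x_1))$, $G^{n+1}_b(x_0,\dots,x_n)=G^2_b(G^n_b(x_0,\dots,x_{n-1}),x_n)$ for $n\ge2$. *)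

From HB Require Import structures.
From mathcomp Require Import all_boot all_order all_algebra.
From mathcomp Require Import classical_sets reals.
Unset Strict Implicit. Unset Printing Implicit Defensive.
Import Order.TTheory GRing.Theory Num.Theory.
Local Open Scope ring_scope.
Local Open Scope classical_set_scope.

Section Defs.
Variable R : realType.

Definition in01 (x : R) : Prop := 0 <= x <= 1.

Definition cube (n : nat) : set ('I_n -> R) := [set x | forall i, in01 (x i)].

Definition upd {n} (x : 'I_n -> R) (i : 'I_n) (t : R) : 'I_n -> R :=
  fun j => if j == i then t else x j.

Definition aggregation (n : nat) (f : ('I_n -> R) -> R) : Prop :=
  [/\ forall x, cube n x -> in01 (f x),
      forall x i t, cube n x -> in01 t -> x i <= t -> f x <= f (upd x i t),
      f (fun _ => 0) = 0 &
      f (fun _ => 1) = 1].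

Definition chi (a x : R) : R := if (a <= x) && (x != 0) then 1 else 0.

Definition Med (b x y : R) : R := Num.max (Num.min x y) (Num.min (Num.max x y) b).

Definition G1 (b x0 : R) : R := Med b (chi 0 x0) (chi 1 x0).
Definition G2 (b x0 x1 : R) : R :=
  Med b (chi 0 (Num.max x0 x1)) (chi 1 (Num.min x0 x1)).

(* G^n_b on a list [x0; ...; x_{n-1}]; G^{n+1}(x0..xn) = G^2(G^n(x0..x_{n-1}), xn).
   The value on the empty list (n = 0) is irrelevant (no 0-ary aggregation
   function exists) and is set to 0. *)
Definition Gseq (b : R) (s : seq R) : R :=
  match s with
  | [::] => 0
  | [:: x0] => G1 b x0
  | x0 :: x1 :: t => foldl (G2 b) (G2 b x0 x1) t
  end.

Definition G {n : nat} (b : R) (x : 'I_n -> R) : R :=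
  Gseq b [seq x i | i <- enum 'I_n].

Definition cube_star (n : nat) : set ('I_n -> R) :=
  [set a | cube n a /\ a <> (fun _ => 0) /\ a <> (fun _ => 1)].

Definition hf (n : nat) (f : ('I_n -> R) -> R) (a x : 'I_n -> R) : R :=
  Num.min (G (f a) x) (\big[Num.min/1]_(i < n | a i != 0) chi (a i) (x i)).

End Defs.

Arguments hf {R n}.
Arguments G {R n}.
Arguments aggregation {R n}.

From HB Require Import structures.
From mathcomp Require Import all_boot all_order all_algebra.
From mathcomp Require Import boolp classical_sets reals.
Import Order.TTheory GRing.Theory Num.Theory.
Local Open Scope ring_scope.
Local Open Scope classical_set_scope.

(* On the cube, G^n_b(x) is 0 at x = 0, 1 at x = 1 and b everywhere else, while the
   meet of the chi_{a_i}(x_i) over J_a is the indicator of a_i <= x_i for all i in J_a.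
   So h^f_a(x) is either 0 or G^n_{f(a)}(x) with a <= x, and monotonicity of f and of
   b |-> G^n_b(x) bounds it by G^n_{f(x)}(x) = f(x). The bound is attained at a = x
   when x is in [0,1]^n_*, and at any a when x is 0 or 1. *)

Lemma sup_eq_greatest (R : realType) (S : set R) m : S m -> ubound S m -> sup S = m.
Proof.
move=> Sm ub; apply: le_anti; rewrite ge_sup //=; last by exists m.
by apply: ub_le_sup => //; exists m.
Qed.

Arguments in01 {R}. Arguments chi {R}. Arguments Med {R}.
Arguments G1 {R}. Arguments G2 {R}. Arguments Gseq {R}. Arguments upd {R n}.

Section GTheory.
Variable R : realType.
Implicit Types (b y z : R) (s : seq R).

Lemma chi0E y : 0 <= y -> chi 0 y = (y != 0)%:R.
Proof. by move=> y0; rewrite /chi y0; case: (y != 0). Qed.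

Lemma chi1E y : y <= 1 -> chi 1 y = (y == 1)%:R.
Proof.
move=> y1; rewrite /chi [y == 1]eq_le y1 /=.
by case: (1 <= y) / boolP => // /(lt_le_trans ltr01) /lt0r_neq0 ->.
Qed.

Lemma Med_bool b (p q : bool) : in01 b ->
  Med b p%:R q%:R = if p && q then 1 else if p || q then b else 0.
Proof.
case/andP=> b0 b1; rewrite /Med.
case: p; case: q => /=; rewrite ?minxx ?maxxx.
- by rewrite (min_r b1) (max_l b1).
- by rewrite (min_r ler01) (max_l ler01) (min_r b1) (max_r b0).
- by rewrite (min_l ler01) (max_r ler01) (min_r b1) (max_r b0).
- by rewrite (min_l b0) maxxx.
Qed.

Lemma eq01 : (0 == 1 :> R) = false.
Proof. by rewrite eq_sym oner_eq0. Qed.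

Lemma in01_0 : in01 (0 : R). Proof. by rewrite /in01 lexx ler01. Qed.
Lemma in01_1 : in01 (1 : R). Proof. by rewrite /in01 lexx ler01. Qed.

Lemma max_eq0 y z : 0 <= y -> 0 <= z -> (Num.max y z == 0) = (y == 0) && (z == 0).
Proof. by move=> y0 z0; rewrite !eq_le ge_max le_max y0 z0 !andbT. Qed.

Lemma min_eq1 y z : y <= 1 -> z <= 1 -> (Num.min y z == 1) = (y == 1) && (z == 1).
Proof. by move=> y1 z1; rewrite !eq_le le_min ge_min y1 z1. Qed.

Definition Gval b s : R :=
  if all (pred1 0) s then 0 else if all (pred1 1) s then 1 else b.

Lemma Gval_in01 b s : in01 b -> in01 (Gval b s).
Proof.
rewrite /Gval => hb; case: ifP => _; first exact: in01_0.
by case: ifP => _; first exact: in01_1.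
Qed.

Lemma Gval_le b b' s : b <= b' -> Gval b s <= Gval b' s.
Proof. by rewrite /Gval; case: ifP => //; case: ifP. Qed.

Lemma G2_Gval b y z : in01 b -> in01 y -> in01 z -> G2 b y z = Gval b [:: y; z].
Proof.
move=> hb /andP[y0 y1] /andP[z0 z1].
rewrite /G2 chi0E ?le_max ?y0 // chi1E ?ge_min ?y1 // Med_bool //.
rewrite max_eq0 // min_eq1 // /Gval /= !andbT.
case: ((y == 0) && (z == 0)) / andP => [[/eqP-> /eqP->]|_] /=; first by rewrite eq01.
by case: (_ && _).
Qed.

Lemma all_pred1_01 s : s != [::] -> all (pred1 0) s -> all (pred1 1) s = false.
Proof. by case: s => // y s _ /andP[/eqP-> _] /=; rewrite eq01. Qed.

Lemma G2_Gval_rcons b s z : in01 b -> in01 z -> s != [::] ->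
  G2 b (Gval b s) z = Gval b (rcons s z).
Proof.
move=> hb hz s0; rewrite G2_Gval //; last exact: Gval_in01.
rewrite /Gval !all_rcons /= !andbT.
have [s_0|s_n0] := boolP (all (pred1 0) s).
  by rewrite (all_pred1_01 _ s0 s_0) eqxx eq01 /= andbT andbF.
have [s_1|s_n1] := boolP (all (pred1 1) s).
  by rewrite oner_eq0 eqxx /= andbT andbF.
rewrite !andbF.
by case: ifP => [/andP[/eqP-> _]|_] //; case: ifP => [/andP[/eqP-> _]|_].
Qed.

Lemma G1_Gval b y : in01 b -> in01 y -> G1 b y = Gval b [:: y].
Proof.
move=> hb hy; have -> : G1 b y = G2 b y y by rewrite /G1 /G2 maxxx minxx.
by rewrite G2_Gval // /Gval /= !andbT !andbb.
Qed.

Lemma foldl_G2_Gval b s t : in01 b -> {in t, forall y, in01 y} -> s != [::] ->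
  foldl (G2 b) (Gval b s) t = Gval b (s ++ t).
Proof.
move=> hb; elim: t s => [|z t IH] s ht s0 /=; first by rewrite cats0.
rewrite G2_Gval_rcons //; last by apply: ht; rewrite mem_head.
rewrite -cat_rcons IH -?size_eq0 ?size_rcons // => y yt.
by apply: ht; rewrite in_cons yt orbT.
Qed.

Lemma Gseq_Gval b s : in01 b -> {in s, forall y, in01 y} -> s != [::] ->
  Gseq b s = Gval b s.
Proof.
move=> hb; case: s => [//|x0 [|x1 t]] hs _ /=.
  by rewrite G1_Gval //; apply: hs; rewrite mem_head.
have [hx0 hx1] : in01 x0 /\ in01 x1 by split; apply: hs; rewrite !inE eqxx ?orbT.
rewrite G2_Gval //.
by rewrite (foldl_G2_Gval _ [:: x0; x1]) // => y yt; apply: hs; rewrite !in_cons yt !orbT.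
Qed.

Variable n : nat.
Implicit Types (x : 'I_n -> R).

Lemma all_pred1_mapP x c :
  reflect (x = fun=> c) (all (pred1 c) [seq x i | i <- enum 'I_n]).
Proof.
rewrite all_map; apply: (iffP allP) => [x_c|-> i _ /=]; last exact: eqxx.
by apply: funext => i; apply/eqP/x_c; rewrite mem_enum.
Qed.

Lemma G_Gval b x : (0 < n)%N -> in01 b -> cube R n x ->
  G b x = Gval b [seq x i | i <- enum 'I_n].
Proof.
move=> n_gt0 hb hx; rewrite /G Gseq_Gval //; first by move=> y /mapP[i _ ->].
by rewrite -size_eq0 size_map size_enum_ord -lt0n.
Qed.

Lemma G_in01 b x : (0 < n)%N -> in01 b -> cube R n x -> in01 (G b x).
Proof. by move=> *; rewrite G_Gval //; apply: Gval_in01. Qed.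

Lemma G_le b b' x : (0 < n)%N -> in01 b -> in01 b' -> cube R n x -> b <= b' ->
  G b x <= G b' x.
Proof. by move=> *; rewrite !G_Gval //; apply: Gval_le. Qed.

Lemma G_cst b c : (0 < n)%N -> in01 b -> in01 c ->
  G b (fun _ : 'I_n => c) = Gval b [:: c].
Proof.
move=> n_gt0 hb hc; rewrite G_Gval //.
have -> : [seq c | _ <- enum 'I_n] = nseq n c.
  by rewrite -[n in nseq n _]size_enum_ord; elim: (enum _) => //= _ s ->.
by rewrite /Gval !all_nseq /= !andbT gtn_eqF.
Qed.

End GTheory.

Section Aggregation.
Context {R : realType} {n : nat} {f : ('I_n -> R) -> R}.
Hypothesis f_agg : aggregation f.
Implicit Types (a x : 'I_n -> R).

Lemma aggregation_arity_gt0 : (0 < n)%N.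
Proof.
case: n f f_agg => // g [_ _ g0 g1]; move: g1.
have -> : (fun _ : 'I_0 => 1 : R) = (fun=> 0) by apply: funext => -[].
by rewrite g0 => /eqP; rewrite eq01.
Qed.

Let n_gt0 : (0 < n)%N := aggregation_arity_gt0.

Lemma aggregation_in01 x : cube R n x -> in01 (f x).
Proof. by case: f_agg => + _ _ _; apply. Qed.

Lemma aggregation_le a x : cube R n a -> cube R n x -> (forall i, a i <= x i) ->
  f a <= f x.
Proof.
move=> ha hx le_ax; have [_ f_upd _ _] := f_agg.
pose y k (i : 'I_n) := if (i < k)%N then x i else a i.
have y_cube k : cube R n (y k) by move=> i; rewrite /y; case: ifP.
have y_step k (kn : (k < n)%N) : y k.+1 = upd (y k) (Ordinal kn) (x (Ordinal kn)).
  apply: funext => j; rewrite /y /upd ltnS leq_eqVlt.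
  by case: (j =P Ordinal kn) => [->|/eqP]; rewrite ?eqxx // -val_eqE => /negbTE ->.
have le_y k : (k <= n)%N -> f a <= f (y k).
  elim: k => [_|k IH kn]; first by have -> : y 0%N = a by apply: funext.
  rewrite y_step; apply: le_trans (IH (ltnW kn)) (f_upd _ _ _ _ _ _) => //.
  by rewrite /y ltnn.
by have := le_y n (leqnn n); have -> : y n = x by apply: funext => i; rewrite /y ltn_ord.
Qed.

Definition supp_le a x := [forall i, (a i != 0) ==> (a i <= x i)].

Lemma supp_le_le a x : cube R n x -> supp_le a x -> forall i, a i <= x i.
Proof.
move=> hx /forallP le_ax i; have := le_ax i.
by case: eqP => [->|] //= _; case/andP: (hx i).
Qed.

Lemma chi_ge0 c y : 0 <= chi c y :> R.
Proof. by rewrite /chi; case: ifP. Qed.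

Lemma bigmin_chiE a x : cube R n a ->
  \big[Num.min/1]_(i < n | a i != 0) chi (a i) (x i) = (supp_le a x)%:R.
Proof.
move=> ha; have [le_ax|/forallPn[i]] := boolP (supp_le a x).
  apply: (big_ind (eq^~ 1)) => [//|_ _ -> ->|i a_i]; first by rewrite minxx.
  have ax_i : a i <= x i by have := forallP le_ax i; rewrite a_i.
  have a_gt0 : 0 < a i by rewrite lt_def a_i; case/andP: (ha i).
  by rewrite /chi ax_i gt_eqF // (lt_le_trans a_gt0).
rewrite negb_imply => /andP[a_i /negbTE ax_i] /=.
rewrite (bigD1 i) //= {1}/chi ax_i /=; apply: min_l.
by apply: (big_ind (>= 0)) => // [u w|j _]; [rewrite le_min => -> ->|exact: chi_ge0].
Qed.

Lemma G_aggregation x : cube R n x -> G (f x) x = f x.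
Proof.
move=> hx; have [_ _ f0 f1] := f_agg.
rewrite G_Gval //; last exact: aggregation_in01.
by rewrite /Gval; case: all_pred1_mapP => [->|_] //; case: all_pred1_mapP => [->|_].
Qed.

Lemma hfE a x : cube R n a -> cube R n x ->
  hf f a x = if supp_le a x then G (f a) x else 0.
Proof.
move=> ha hx; rewrite /hf bigmin_chiE //.
have /andP[G0 G1] : in01 (G (f a) x) by apply: G_in01 => //; exact: aggregation_in01.
by case: ifP => _; [apply: min_l | apply: min_r].
Qed.

Lemma hf_le a x : cube R n a -> cube R n x -> hf f a x <= f x.
Proof.
move=> ha hx; have [fa01 fx01] := (aggregation_in01 _ ha, aggregation_in01 _ hx).
rewrite hfE //; case: ifP => [le_ax|_]; last by case/andP: fx01.
rewrite -[leRHS]G_aggregation //; apply: G_le => //.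
by apply: aggregation_le => //; apply: supp_le_le.
Qed.

Lemma cube_star_cst (c : R) : (0 < n)%N -> 0 < c < 1 -> cube_star R n (fun=> c).
Proof.
move=> n_pos /andP[c0 c1]; split; first by move=> i; rewrite /in01 !ltW.
split => /(congr1 (fun g => g (Ordinal n_pos))) /eqP.
  by rewrite (gt_eqF c0).
by rewrite (lt_eqF c1).
Qed.

Lemma hf_attained x : cube R n x -> exists2 a, cube_star R n a & hf f a x = f x.
Proof.
move=> hx; have [_ _ f0 f1] := f_agg.
pose c : R := 2^-1.
have c_star : cube_star R n (fun=> c).
  by apply: cube_star_cst; rewrite // invr_gt0 ltr0n invf_lt1 ?ltr0n ?ltr1n.
have [c_cube _] := c_star.
have fc01 : in01 (f (fun=> c)) by apply: aggregation_in01.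
have [h0 h1] := (in01_0 R, in01_1 R).
have [x0|x_n0] := pselect (x = fun=> 0).
  exists (fun=> c) => //; rewrite x0 f0 hfE ?G_cst //.
  by case: ifP => // _; rewrite /Gval /= eqxx.
have [x1|x_n1] := pselect (x = fun=> 1).
  exists (fun=> c) => //; rewrite x1 f1 hfE ?G_cst //.
  have -> : supp_le (fun=> c) (fun=> 1).
    by apply/forallP => i; apply/implyP => _; case/andP: (c_cube i).
  by rewrite /Gval /= oner_eq0 eqxx.
exists x => //; rewrite hfE ?G_aggregation //.
by have -> : supp_le x x by apply/forallP => i; apply/implyP.
Qed.

End Aggregation.

Theorem lemma3 (R : realType) (n : nat) (f : ('I_n -> R) -> R) :
  aggregation f ->
  forall x : 'I_n -> R, cube R n x ->
    f x = sup [set hf f a x | a in cube_star R n].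
Proof.
move=> f_agg x hx; apply/esym/sup_eq_greatest.
  by have [a a_star <-] := hf_attained f_agg _ hx; exists a.
by move=> _ [a [a_cube _] <-]; apply: hf_le.
Qed.
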